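(* Every zero-error randomized streaming algorithm for \textsc{Find-Support-Elem} that is $\frac{n}{s}$-concentrated must use $\Omega\left(\frac{s}{\log n}\right)$ space.
   Context: \textsc{Find-Support-Elem} (turnstile model): a vector $z\in\mathbb{Z}^n$ starts at $0$ and receives a stream of updates of the form ``increment $z_i$ by 1'' or ``decrement $z_i$ by 1''; a valid input is one whose final vector is nonzero, and the goal is to output an index $i$ with $z_i\neq 0$ in the final vector. A randomized algorithm is zero-error if with probability one it either outputs a valid output or outputs $\bot$. An algorithm $A$ is $k$-concentrated if for every valid input $x$ there is some output $F(x)$ such that $\Pr_r[A(x,r)=F(x)]\ge \frac1k$. Space is in bits of memory of the one-pass streaming algorithm. *)

From HB Require Import structures.
From mathcomp Require Import all_boot all_order all_algebra.
From mathcomp Require Import all_classical all_reals all_analysis.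
Set Implicit Arguments. Unset Strict Implicit. Unset Printing Implicit Defensive.
Import Order.TTheory GRing.Theory Num.Theory.
Local Open Scope ring_scope.

(* A turnstile update on z in Z^n: (i, true) = "increment z_i by 1",
   (i, false) = "decrement z_i by 1". *)
Definition update (n : nat) := ('I_n * bool)%type.

Definition final_vec (n : nat) (x : seq (update n)) (i : 'I_n) : int :=
  \sum_(u <- x | u.1 == i) (if u.2 then 1 else -1).

Definition valid_input (n : nat) (x : seq (update n)) : Prop :=
  exists i : 'I_n, final_vec x i != 0.

(* The random seed r (drawn
   once from a probability space Omega) is accessible throughout
   (random-oracle style; randomness is not charged to space).
   Output None stands for "bot". *)
Record streaming_alg (n S : nat) (Omega : Type) := StreamingAlg {
  sa_init : Omega -> S.-tuple bool;
  sa_step : Omega -> S.-tuple bool -> update n -> S.-tuple bool;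
  sa_out  : Omega -> S.-tuple bool -> option 'I_n }.

Definition run (n S : nat) (Omega : Type) (A : streaming_alg n S Omega)
  (x : seq (update n)) (r : Omega) : option 'I_n :=
  sa_out A r (foldl (sa_step A r) (sa_init A r) x).

Definition ok_output (n : nat) (x : seq (update n)) (o : option 'I_n) : bool :=
  if o is Some i then final_vec x i != 0 else true.

(* Fix, for every valid stream x, an index F x that A outputs with probability
   at least p = s/n; by zero error, F x is in the support of x.  For a set
   T of indices, insert T and then repeatedly delete the index F answers on the
   current stream: the t-th deleted index a_t(T), t < |T|, enumerates T.  In
   expectation A answers a_t(T) on at least p * sum_T |T| = p n 2^(n-1) of the
   pairs (T, t).
   Now fix the seed.  If T' has the size of T and leads A to the same memory
   state, A cannot tell "insert T', then the first t deletions for T" from the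
   stream for T, so by zero error a correct answer a_t(T) lies in T'.  Hence the
   correct answers for T lie in the intersection of its class.  A class whose
   intersection has g elements has at most 2^(n-g) members, and there are at
   most 2^S (n+1) classes, so at most (m+1) 2^n pairs are answered correctly
   once 2^m >= 2^S (n+1) n.  Comparing, s <= 2(m+1) = O(S + log n). *)

From HB Require Import structures.
From mathcomp Require Import all_boot all_order all_algebra.
From mathcomp Require Import all_classical all_reals all_analysis.
From mathcomp Require Import measurable_realfun.
From mathcomp Require Import zify ring lra.
Set Implicit Arguments. Unset Strict Implicit. Unset Printing Implicit Defensive.
Import Order.TTheory GRing.Theory Num.Theory.
Local Open Scope ring_scope.

Section Streams.
Variable n : nat.
Implicit Types (x y : seq (update n)) (T : {set 'I_n}).

Lemma final_vec_cat x y i : final_vec (x ++ y) i = final_vec x i + final_vec y i.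
Proof. by rewrite /final_vec big_cat. Qed.

Lemma final_vec_seq1 (j : 'I_n) (b : bool) (i : 'I_n) :
  final_vec [:: (j, b)] i = if j == i then (if b then 1 else -1) else 0.
Proof. by rewrite /final_vec big_cons big_nil /=; case: (j == i); rewrite ?addr0. Qed.

Lemma final_vec_rcons_del x (j i : 'I_n) :
  final_vec (rcons x (j, false)) i = final_vec x i - (j == i : nat)%:Z.
Proof.
by rewrite -cats1 final_vec_cat final_vec_seq1; case: (j == i); rewrite ?subr0.
Qed.

Definition validb x := [exists i, final_vec x i != 0].

Lemma validP x : reflect (valid_input x) (validb x).
Proof. exact: existsP. Qed.

Definition insertion T : seq (update n) := [seq (i, true) | i <- enum T].

Lemma final_vec_insertion T i : final_vec (insertion T) i = (i \in T : nat)%:Z.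
Proof.
rewrite /final_vec big_map (eq_bigr (fun _ => 1)) // big_enum_cond /=.
rewrite (eq_bigl (fun j => (j == i) && (j \in T))); last by move=> j; rewrite andbC.
by rewrite big_mkcondr /= big_pred1_eq; case: (i \in T).
Qed.

End Streams.

Section GreedyDeletion.
Variables (n : nat) (F : seq (update n) -> 'I_n).
Hypothesis F_support : forall x, validb x -> final_vec x (F x) != 0.
Implicit Types (T : {set 'I_n}) (t u : nat).

(* The guard stops the stream once it is invalid: F is only meaningful on valid
   streams. *)
Fixpoint deletions T t : seq (update n) :=
  if t is t'.+1 then
    let w := deletions T t' in
    if validb (insertion T ++ w) then rcons w (F (insertion T ++ w), false) else w
  else [::].

Definition greedy T t := insertion T ++ deletions T t.
Definition greedy_pick T t := F (greedy T t).
Definition survivors T t := [set i | final_vec (greedy T t) i != 0].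

Lemma greedyS T t : greedy T t.+1 =
  if validb (greedy T t) then rcons (greedy T t) (greedy_pick T t, false)
  else greedy T t.
Proof. by rewrite /greedy /=; case: ifP => //; rewrite rcons_cat. Qed.

Lemma validb_survivors T t : validb (greedy T t) = (0 < #|survivors T t|)%N.
Proof. by apply/existsP/card_gt0P => -[i hi]; exists i; rewrite ?inE in hi *. Qed.

Lemma final_vec_greedy_bool T t i : 0 <= final_vec (greedy T t) i <= 1.
Proof.
elim: t => [|t IH].
  by rewrite /greedy cats0 final_vec_insertion; case: (i \in T).
rewrite greedyS; case: ifP => V //.
rewrite final_vec_rcons_del; case: eqVneq => [pick_i|_]; last by rewrite subr0.
have := F_support V; rewrite -/(greedy_pick T t) pick_i; lia.
Qed.

Lemma final_vec_greedy T t i :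
  final_vec (greedy T t) i = (i \in survivors T t : nat)%:Z.
Proof. by rewrite inE; have := final_vec_greedy_bool T t i; case: eqVneq => //=; lia. Qed.

Lemma survivors0 T : survivors T 0 = T.
Proof.
apply/setP => i; rewrite inE /greedy cats0 final_vec_insertion.
by case: (i \in T).
Qed.

Lemma greedy_pick_survivor T t :
  validb (greedy T t) -> greedy_pick T t \in survivors T t.
Proof. by move=> V; rewrite inE; exact: F_support. Qed.

Lemma survivorsS T t : survivors T t.+1 =
  if validb (greedy T t) then survivors T t :\ greedy_pick T t
  else survivors T t.
Proof.
apply/setP => i; rewrite [in LHS]inE greedyS; case: ifP => V; last by rewrite inE.
rewrite final_vec_rcons_del final_vec_greedy in_setD1.
case: (eqVneq (greedy_pick T t) i) => [<-|_]; last by rewrite subr0; case: (_ \in _).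
by rewrite greedy_pick_survivor.
Qed.

Lemma survivors_subS T t : survivors T t.+1 \subset survivors T t.
Proof. by rewrite survivorsS; case: ifP => _; [exact: subD1set | exact: subxx]. Qed.

Lemma survivors_mono T u t : (u <= t)%N -> survivors T t \subset survivors T u.
Proof.
elim: t => [|t IH]; first by rewrite leqn0 => /eqP ->.
rewrite leq_eqVlt ltnS => /orP [/eqP -> // | ut].
exact: fintype.subset_trans (survivors_subS T t) (IH ut).
Qed.

Lemma survivors_sub T t : survivors T t \subset T.
Proof. by have := survivors_mono T (leq0n t); rewrite survivors0. Qed.

Lemma card_survivors T t : #|survivors T t| = (#|T| - t)%N.
Proof.
elim: t => [|t IH]; first by rewrite survivors0 subn0.
rewrite survivorsS; case: ifP => V; last by move: V; rewrite validb_survivors IH; lia.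
have := cardsD1 (greedy_pick T t) (survivors T t).
by rewrite greedy_pick_survivor // IH; lia.
Qed.

Lemma greedy_valid T t : (t < #|T|)%N -> validb (greedy T t).
Proof. by rewrite validb_survivors card_survivors subn_gt0. Qed.

Lemma greedy_pick_notin T u t : (u < t)%N -> greedy_pick T u \notin survivors T t.
Proof.
move=> ut; apply/negP => /(fintype.subsetP (survivors_mono T ut)).
rewrite survivorsS; case: ifP => V; first by rewrite in_setD1 eqxx.
move=> W_pick; suff: (0 < #|survivors T u|)%N by rewrite -validb_survivors V.
by apply/card_gt0P; exists (greedy_pick T u).
Qed.

Lemma greedy_pick_inj T u t : (u < #|T|)%N -> (t < #|T|)%N ->
  greedy_pick T u = greedy_pick T t -> u = t.
Proof.
have later_pick_fresh u' t' : (u' < t')%N -> (t' < #|T|)%N ->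
    greedy_pick T u' != greedy_pick T t'.
  move=> ut ht; apply: contraNneq (greedy_pick_notin T ut) => ->.
  exact/greedy_pick_survivor/greedy_valid.
move=> hu ht e; case: (ltngtP u t) => // [ut|tu].
  by have := later_pick_fresh _ _ ut ht; rewrite e eqxx.
by have := later_pick_fresh _ _ tu hu; rewrite e eqxx.
Qed.

Lemma greedy_pick_mem T t : (t < #|T|)%N -> greedy_pick T t \in T.
Proof.
move=> ht; apply: (fintype.subsetP (survivors_sub T t)).
exact/greedy_pick_survivor/greedy_valid.
Qed.

Lemma final_vec_deletions T t i : final_vec (deletions T t) i =
  (i \in survivors T t : nat)%:Z - (i \in T : nat)%:Z.
Proof.
have := final_vec_greedy T t i; rewrite /greedy final_vec_cat final_vec_insertion => <-.
by rewrite addrC addKr.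
Qed.

Lemma fooling_valid T' T t : (t < #|T|)%N -> #|T'| = #|T| ->
  validb (insertion T' ++ deletions T t).
Proof.
move=> ht eqT; have W_T := survivors_sub T t.
have : ~~ (T' \subset T :\: survivors T t).
  apply/negP => /subset_leq_card.
  by rewrite cardsD (finset.setIidPr W_T) card_survivors eqT; lia.
case/fintype.subsetPn => i iT' iD; apply/existsP; exists i.
rewrite final_vec_cat final_vec_insertion final_vec_deletions iT'.
move: iD; rewrite finset.in_setD negb_and negbK.
case: (boolP (i \in survivors T t)) => [iW _ | _ /negPf ->] //.
by rewrite (fintype.subsetP W_T _ iW).
Qed.

Lemma fooling_pick_mem T' T t : (t < #|T|)%N ->
  final_vec (insertion T' ++ deletions T t) (greedy_pick T t) != 0 ->
  greedy_pick T t \in T'.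
Proof.
move=> ht; rewrite final_vec_cat final_vec_insertion final_vec_deletions.
rewrite greedy_pick_survivor ?greedy_valid // greedy_pick_mem //.
by case: (_ \in T').
Qed.

End GreedyDeletion.

Lemma card_set_ord_le n (A : {set 'I_n}) : (#|A| <= n)%N.
Proof. by rewrite -[X in (_ <= X)%N](card_ord n) max_card. Qed.

Lemma card_supersets n (A : {set 'I_n}) :
  (#|[set T : {set 'I_n} | A \subset T]| * 2 ^ #|A| <= 2 ^ n)%N.
Proof.
pose outside (T : {set 'I_n}) := T :&: ~: A.
have outside_inj : {in [set T : {set 'I_n} | A \subset T] &, injective outside}.
  move=> T1 T2; rewrite !inE => AT1 AT2 /setP e; apply/setP => i.
  have := e i; rewrite !finset.in_setI !finset.in_setC.
  case: (boolP (i \in A)) => iA /=; last by rewrite !andbT.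
  by rewrite (fintype.subsetP AT1 _ iA) (fintype.subsetP AT2 _ iA).
rewrite -(card_in_imset outside_inj).
have : outside @: [set T : {set 'I_n} | A \subset T] \subset powerset (~: A).
  by apply/fintype.subsetP => _ /imsetP [T _ ->]; rewrite powersetE subsetIr.
move/subset_leq_card; rewrite card_powerset => le_card.
have -> : (2 ^ n = 2 ^ #|~: A| * 2 ^ #|A|)%N by rewrite -expnD addnC cardsC card_ord.
by rewrite leq_mul2r le_card orbT.
Qed.

Lemma card_sets n : #|{set 'I_n}| = (2 ^ n)%N.
Proof. by rewrite -cardsT -powersetT card_powerset cardsT card_ord. Qed.

Lemma sum_card_sets n : (2 * \sum_(T : {set 'I_n}) #|T| = n * 2 ^ n)%N.
Proof.
have -> : (2 * \sum_(T : {set 'I_n}) #|T| = \sum_(T : {set 'I_n}) (#|T| + #|~: T|))%N.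
  rewrite big_split /= mul2n -addnn; congr (_ + _).
  by rewrite (reindex_inj (@finset.setC_inj _)).
rewrite (eq_bigr (fun _ => n)); last by move=> T _; rewrite cardsC card_ord.
by rewrite sum_nat_const card_sets mulnC.
Qed.

Lemma sum_ord_ltn n c : (\sum_(t < n) (t < c : nat) = minn c n)%N.
Proof.
elim: n => [|n IH]; first by rewrite big_ord0 minn0.
by rewrite big_ord_recr /= IH; case: (ltnP n c) => /=; lia.
Qed.

(* If g > m, then a * g * 2^m <= g * (a * 2^g) <= N * 2^N. *)
Lemma leq_mul_exp_split a g m N : (a * 2 ^ g <= 2 ^ N)%N -> (g <= N)%N ->
  (a * g * 2 ^ m <= m * a * 2 ^ m + N * 2 ^ N)%N.
Proof.
move=> h gN; case: (leqP g m) => gm.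
  apply: leq_trans (leq_addr _ _).
  by rewrite [(m * a)%N]mulnC leq_mul2r leq_mul2l gm !orbT.
have : (2 ^ m <= 2 ^ g)%N by rewrite leq_exp2l //; lia.
move: h; set X := (2 ^ m)%N; set Y := (2 ^ g)%N; set Z := (2 ^ N)%N => h XY.
have h1 : (a * g * X <= a * g * Y)%N by rewrite leq_mul2l XY orbT.
have h2 : (g * (a * Y) <= g * Z)%N by rewrite leq_mul2l h orbT.
have h3 : (g * Z <= N * Z)%N by rewrite leq_mul2r gN orbT.
nia.
Qed.

Section ClassCore.
Variables (n : nat) (Q : finType) (cl : {set 'I_n} -> Q).

Definition class_core (q : Q) : {set 'I_n} :=
  [set i | [forall T, (cl T == q) ==> (i \in T)]].

Lemma sum_card_class_core m : (#|Q| * n <= 2 ^ m)%N ->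
  (\sum_(T : {set 'I_n}) #|class_core (cl T)| <= (m + 1) * 2 ^ n)%N.
Proof.
move=> hQ; rewrite (partition_big cl predT) //=.
pose a q := #|[set T | cl T == q]|.
rewrite (eq_bigr (fun q => a q * #|class_core q|)%N); last first.
  move=> q _; rewrite (eq_bigr (fun _ => #|class_core q|)); last by move=> T /eqP ->.
  by rewrite -sum_nat_const; apply: eq_bigl => T; rewrite inE.
have sum_a : (\sum_q a q = 2 ^ n)%N.
  rewrite -card_sets -sum1_card (partition_big cl predT) //=.
  by apply: eq_bigr => q _; rewrite /a -sum1_card; apply: eq_bigl => T; rewrite inE.
have a_core q : (a q * 2 ^ #|class_core q| <= 2 ^ n)%N.
  apply: leq_trans (card_supersets (class_core q)); rewrite leq_mul2r.
  apply/orP; right; apply: subset_leq_card; apply/fintype.subsetP => T.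
  rewrite !inE => /eqP clT; apply/fintype.subsetP => i; rewrite inE.
  by move=> /forallP /(_ T); rewrite clT eqxx.
have : ((\sum_q a q * #|class_core q|) * 2 ^ m <=
         \sum_q (m * a q * 2 ^ m + n * 2 ^ n))%N.
  by rewrite big_distrl /=; apply: leq_sum => q _; exact/leq_mul_exp_split/card_set_ord_le.
rewrite big_split /= -!big_distrl -big_distrr /= sum_a sum_nat_const.
rewrite (eq_card (B := Q)) //.
move: hQ; set X := (2 ^ m)%N; set Y := (2 ^ n)%N.
move=> hQ le_k; rewrite -(@leq_pmul2r X) ?expn_gt0 //; apply: leq_trans le_k _.
have : (#|Q| * n * Y <= X * Y)%N by rewrite leq_mul2r hQ orbT.
by rewrite !mulnDl mul0n addn0 leq_add2l [(Y * X)%N]mulnC.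
Qed.

End ClassCore.

Local Open Scope classical_set_scope.

Section AlmostSure.
Context {R : realType} {d : measure_display} {Omega : measurableType d}.
Variable P : probability Omega R.

Lemma measurable_fin_pred (X : finType) (f : Omega -> X) (D : pred X) :
  (forall o, measurable [set r | f r = o]) -> measurable [set r | D (f r)].
Proof.
move=> mf; have -> : [set r | D (f r)] = \bigcup_(o in [set o | D o]) [set r | f r = o].
  by apply/seteqP; split => [r Dr | r [q Dq fq]] /=; [by exists (f r) | by rewrite fq].
exact: fin_bigcup_measurable finite_finset _.
Qed.

Lemma ae_prob1 (E : set Omega) : measurable E -> P E = 1%E ->
  \forall r \ae P, E r.
Proof.
move=> mE PE; apply/negligibleP; first exact: measurableC.
by have := probability_setC P mE; rewrite PE subee.
Qed.

Lemma ae_exists (E Q : set Omega) : measurable E -> (0 < P E)%E ->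
  (\forall r \ae P, Q r) -> exists r, E r /\ Q r.
Proof.
move=> mE PE [N [mN PN QN]]; apply: contrapT => noEQ.
have EN : E `<=` N by move=> r Er; apply: QN => Qr; apply: noEQ; exists r.
have : (P E <= 0)%E by rewrite -PN; exact: (le_measure P (mem_set mE) (mem_set mN) EN).
by move=> /(lt_le_trans PE); rewrite ltxx.
Qed.

Lemma expected_count_le (I : finType) (e : I -> Omega -> bool) (B : nat) :
  (forall k, measurable [set r | e k r]) ->
  (\forall r \ae P, (\sum_k e k r <= B)%N) ->
  (\sum_k P [set r | e k r] <= (B%:R)%:E)%E.
Proof.
move=> me count_le.
have mind k : measurable_fun [set: Omega] (EFin \o (\1_[set r | e k r] : Omega -> R)).
  by apply: measurableT_comp => //; exact: measurable_indic.
rewrite (eq_bigr (fun k => \int[P]_r (\1_[set r | e k r] r)%:E)%E); last first.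
  by move=> k _; rewrite integral_indic // setIT.
rewrite -ge0_integral_sum //.
have PT : (P : {measure set Omega -> \bar R}) setT = 1%E := probability_setT P.
apply: (@le_trans _ _ (\int[P]_r (B%:R)%:E)%E); last by rewrite integral_cst // PT mule1.
apply: ae_ge0_le_integral => //.
- by move=> r _; apply: sume_ge0 => k _; rewrite lee_fin.
- exact: emeasurable_sum.
apply: filterS count_le => r count_r _; rewrite sumEFin lee_fin.
rewrite -(ler_nat R) natr_sum in count_r; apply: le_trans count_r.
apply: ler_sum => k _; rewrite indicE.
case: (boolP (e k r)) => ekr; first by rewrite mem_set.
by rewrite memNset //; apply/negP.
Qed.

End AlmostSure.

Section Algorithm.
Context {R : realType} {d : measure_display} {Omega : measurableType d}.
Variables (P : probability Omega R) (n S : nat) (A : streaming_alg n S Omega).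
Implicit Types (x y : seq (update n)) (T : {set 'I_n}) (t : nat) (r : Omega).

Definition run_measurable :=
  forall x o, measurable [set r | run A x r = o].
Definition zero_error :=
  forall x, valid_input x -> P [set r | ok_output x (run A x r)] = 1%E.
Definition concentrated (p : R) :=
  forall x, valid_input x -> exists i, (p%:E <= P [set r | run A x r = Some i])%E.

Hypotheses (A_meas : run_measurable) (A_zero_error : zero_error).

Lemma zero_error_ae x : valid_input x -> \forall r \ae P, ok_output x (run A x r).
Proof.
move=> vx; apply: ae_prob1 (A_zero_error vx).
exact: measurable_fin_pred (fun o => ok_output x o) (A_meas x).
Qed.

Lemma output_in_support x i : valid_input x ->
  (0 < P [set r | run A x r = Some i])%E -> final_vec x i != 0.
Proof.
move=> vx Pi; have [r [/= -> //]] := ae_exists (A_meas x (Some i)) Pi (zero_error_ae vx).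
Qed.

Lemma state_size_gt0 p : (1 < n)%N -> 0 < p -> concentrated p -> (0 < S)%N.
Proof.
(* Without memory the output ignores the stream, so two streams with disjoint
   supports would share a likely output. *)
move=> n_gt1 p_gt0 conc; rewrite lt0n; apply/negP => /eqP S0.
have n_gt0 : (0 < n)%N by apply: ltnW.
pose i0 : 'I_n := Ordinal n_gt0; pose i1 : 'I_n := Ordinal n_gt1.
pose x b : seq (update n) := [:: (if b then i1 else i0, true)].
have final_x b i : final_vec (x b) i = ((if b then i1 else i0) == i : nat)%:Z.
  by rewrite final_vec_seq1; case: (_ == i).
have valid_x b : valid_input (x b) by exists (if b then i1 else i0); rewrite final_x eqxx.
have nil_tuple (u : S.-tuple bool) : val u = [::].
  by apply: size0nil; rewrite size_tuple S0.
have run_x r : run A (x false) r = run A (x true) r.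
  by rewrite /run; congr sa_out; apply/val_inj; rewrite !nil_tuple.
have [i Pi] := conc _ (valid_x false).
have {}Pi : (0 < P [set r | run A (x false) r = Some i])%E.
  by apply: lt_le_trans Pi; rewrite lte_fin.
have i_i0 : i = i0.
  by have := output_in_support (valid_x false) Pi; rewrite final_x; case: (eqVneq i0 i).
have : (0 < P [set r | run A (x true) r = Some i0])%E.
  by rewrite -i_i0; under eq_set do rewrite -run_x.
by move/(output_in_support (valid_x true)); rewrite final_x.
Qed.

Lemma concentrated_pick p : (0 < n)%N -> 0 < p -> concentrated p ->
  exists F : seq (update n) -> 'I_n,
    (forall x, validb x -> final_vec x (F x) != 0) /\
    (forall x, validb x -> (p%:E <= P [set r | run A x r = Some (F x)])%E).
Proof.
move=> n_gt0 p_gt0 conc.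
have pick x : exists i : 'I_n, validb x ->
    final_vec x i != 0 /\ (p%:E <= P [set r | run A x r = Some i])%E.
  case: (boolP (validb x)) => [/validP vx | _]; last by exists (Ordinal n_gt0).
  have [i Pi] := conc x vx; exists i => _; split => //.
  by apply: output_in_support vx _; apply: lt_le_trans Pi; rewrite lte_fin.
by have [F HF] := choice pick; exists F; split => x /HF [].
Qed.

Definition state r x := foldl (sa_step A r) (sa_init A r) x.

Lemma run_cat_state r x x' y : state r x = state r x' ->
  run A (x ++ y) r = run A (x' ++ y) r.
Proof. by rewrite /run /state !foldl_cat => ->. Qed.

Section Hits.
Variables (F : seq (update n) -> 'I_n) (p : R).
Hypothesis F_support : forall x, validb x -> final_vec x (F x) != 0.
Hypothesis F_prob :
  forall x, validb x -> (p%:E <= P [set r | run A x r = Some (F x)])%E.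

Definition hit T t r :=
  (t < #|T|)%N && (run A (greedy F T t) r == Some (greedy_pick F T t)).

Definition set_class r T : S.-tuple bool * 'I_n.+1 :=
  (state r (insertion T), inord #|T|).

Definition fooling_safe r :=
  forall T' T (t : 'I_n), #|T'| = #|T| -> (t < #|T|)%N ->
  let y := insertion T' ++ deletions F T t in ok_output y (run A y r).

Lemma set_class_eq r T' T : set_class r T' = set_class r T ->
  state r (insertion T') = state r (insertion T) /\ #|T'| = #|T|.
Proof.
by case=> -> /(congr1 val); rewrite /= !inordK // ltnS card_set_ord_le.
Qed.

Lemma hits_le_class_core r T : fooling_safe r ->
  (\sum_(t < n) hit T t r <= #|class_core (set_class r) (set_class r T)|)%N.
Proof.
move=> safe; set H := [set t : 'I_n | hit T t r]%SET.
have -> : (\sum_(t < n) hit T t r = #|H|)%N.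
  by rewrite -sum1_card [RHS]big_mkcond; apply: eq_bigr => t _; rewrite inE; case: hit.
have pick_inj : {in H &, injective (greedy_pick F T \o val)}.
  move=> t1 t2; rewrite !inE => /andP [ht1 _] /andP [ht2 _] e.
  exact/val_inj/(greedy_pick_inj F_support ht1 ht2 e).
rewrite -(card_in_imset pick_inj); apply: subset_leq_card.
apply/fintype.subsetP => j /imsetP [t]; rewrite inE => /andP [ht /eqP run_t] ->.
rewrite inE; apply/forallP => T'; apply/implyP => /eqP /set_class_eq [st_eq card_eq].
apply: (fooling_pick_mem F_support ht).
have /= := safe T' T t card_eq ht.
by rewrite (run_cat_state _ st_eq) -/(greedy F T t) run_t.
Qed.

Lemma ae_fooling_safe : \forall r \ae P, fooling_safe r.
Proof.
pose safe_at (k : {set 'I_n} * {set 'I_n} * 'I_n) r :=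
  #|k.1.1| = #|k.1.2| -> (k.2 < #|k.1.2|)%N ->
  ok_output (insertion k.1.1 ++ deletions F k.1.2 k.2)
            (run A (insertion k.1.1 ++ deletions F k.1.2 k.2) r).
have : \forall r \ae P, forall k, safe_at k r.
  apply: filter_forall => -[[T' T] t]; rewrite /safe_at /=.
  case: (eqVneq #|T'| #|T|) => [eqT | neqT]; last first.
    by apply: aeW => r /eqP; rewrite (negbTE neqT).
  case: (ltnP t #|T|) => [ht | leT]; last by apply: aeW.
  have vx : valid_input (insertion T' ++ deletions F T t).
    by apply/validP; exact: fooling_valid.
  by apply: filterS (zero_error_ae vx) => r ok_r _ _.
by apply: filterS => r safe_r T' T t; exact: (safe_r (T', T, t)).
Qed.

Lemma measurable_hit T t : measurable [set r | hit T t r].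
Proof.
exact: measurable_fin_pred
  (fun o => (t < #|T|)%N && (o == Some (greedy_pick F T t))) (A_meas _).
Qed.

Lemma expected_hits_le m : (2 ^ S * n.+1 * n <= 2 ^ m)%N ->
  (\sum_(k : {set 'I_n} * 'I_n) P [set r | hit k.1 k.2 r]
     <= ((m + 1) * 2 ^ n)%:R%:E)%E.
Proof.
move=> hm; apply: expected_count_le => [k|]; first exact: measurable_hit.
apply: filterS ae_fooling_safe => r safe.
rewrite -(pair_big predT predT (fun T (t : 'I_n) => hit T t r : nat)) /=.
apply: (@leq_trans (\sum_T #|class_core (set_class r) (set_class r T)|)).
  by apply: leq_sum => T _; exact: hits_le_class_core.
by apply: sum_card_class_core; rewrite card_prod card_tuple card_bool card_ord.
Qed.

Lemma expected_hits_ge :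
  ((p * (\sum_(T : {set 'I_n}) #|T|)%:R)%:E
     <= \sum_(k : {set 'I_n} * 'I_n) P [set r | hit k.1 k.2 r])%E.
Proof.
have card_sum (T : {set 'I_n}) : #|T| = (\sum_(t < n) (t < #|T| : nat))%N.
  by rewrite sum_ord_ltn; apply/esym/minn_idPl/card_set_ord_le.
rewrite (eq_bigr _ (fun T _ => card_sum T)) pair_big natr_sum mulr_sumr -sumEFin.
apply: lee_sum => -[T t] _ /=; case: ltnP => [ht | _]; last by rewrite mulr0 measure_ge0.
rewrite mulr1 (_ : [set r | hit T t r] =
                  [set r | run A (greedy F T t) r = Some (greedy_pick F T t)]).
  exact/F_prob/greedy_valid.
by apply/seteqP; split => r; rewrite /hit /= ht => /eqP.
Qed.

End Hits.

Lemma concentration_le_space p m : (0 < n)%N -> 0 < p -> concentrated p ->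
  (2 ^ S * n.+1 * n <= 2 ^ m)%N -> p * n%:R <= 2 * (m + 1)%:R.
Proof.
move=> n_gt0 p_gt0 conc hm.
have [F [F_support F_prob]] := concentrated_pick n_gt0 p_gt0 conc.
have := le_trans (expected_hits_ge F_support F_prob) (expected_hits_le F_support hm).
rewrite lee_fin natrM => le_sum.
have X_gt0 : (0 : R) < (2 ^ n)%:R by rewrite ltr0n expn_gt0.
have pnX : p * n%:R * (2 ^ n)%:R = 2 * (p * (\sum_(T : {set 'I_n}) #|T|)%:R).
  by rewrite -mulrA -natrM -sum_card_sets natrM; ring.
by rewrite -(ler_pM2r X_gt0) pnX -mulrA ler_pM2l.
Qed.

End Algorithm.

Lemma mulSnn_le_exp_trunc_log n :
  (n.+1 * n <= 2 ^ (2 * (trunc_log 2 n).+1))%N.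
Proof.
have := trunc_log_ltn n (isT : (1 < 2)%N).
by rewrite mul2n -addnn expnD => lt_n; apply: leq_mul => //; apply: ltnW.
Qed.

Lemma ln_bound_of_le_log (R : realType) (n S k : nat) (s : R) :
  (1 < n)%N -> (0 < S)%N -> (2 ^ k <= n)%N ->
  s <= 2 * (S + 2 * k.+1 + 1)%:R -> ln 2 / 12 * s / ln n%:R <= S%:R.
Proof.
move=> n_gt1 S_gt0 k_le s_le.
have ln2_le : ln (2 : R) <= ln n%:R by rewrite ler_ln ?posrE ?ltr0n ?ler_nat // ltnW.
have ln2_gt0 : 0 < ln (2 : R) by rewrite ln_gt0 // ltr1n.
have k_ln : k%:R * ln 2 <= ln (n%:R : R).
  rewrite mulr_natl -lnXn // -natrX ler_ln ?posrE ?ltr0n ?expn_gt0 ?ler_nat //.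
  exact: leq_trans (ltnW n_gt1).
have S_ge1 : (1 : R) <= S%:R by rewrite ler1n.
have k_ge0 : (0 : R) <= k%:R by [].
move: s_le; rewrite !natrD natrM /= => s_le.
rewrite ler_pdivrMr; last exact: lt_le_trans ln2_le.
nra.
Qed.

Theorem mainTheorem8 (R : realType) :
  exists c : R, 0 < c /\
  forall (n : nat) (s : R) (S : nat) (d : measure_display)
         (Omega : measurableType d) (P : probability Omega R)
         (A : streaming_alg n S Omega),
    (1 < n)%N -> 0 < s ->
    (* A(x, .) is a random variable: its outcome events are measurable *)
    (forall (x : seq (update n)) (o : option 'I_n),
        measurable [set r | run A x r = o]) ->
    (* zero-error: with probability one the output is valid or bot *)
    (forall x : seq (update n), valid_input x ->
        P [set r | ok_output x (run A x r)] = 1%E) ->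
    (* (n/s)-concentrated: some output F(x) has probability >= s/n *)
    (forall x : seq (update n), valid_input x ->
        exists i : 'I_n, ((s / n%:R)%:E <= P [set r | run A x r = Some i])%E) ->
    c * s / ln (n%:R) <= S%:R.
Proof.
exists (ln 2 / 12); split; first by rewrite divr_gt0 // ln_gt0 // ltr1n.
move=> n s S d Omega P A n_gt1 s_gt0 A_meas A_zero_error conc.
have n_gt0 : (0 < n)%N by apply: ltnW.
have p_gt0 : 0 < s / n%:R by rewrite divr_gt0 // ltr0n.
have S_gt0 := state_size_gt0 A_meas A_zero_error n_gt1 p_gt0 conc.
set k := trunc_log 2 n.
have classes_le : (2 ^ S * n.+1 * n <= 2 ^ (S + 2 * k.+1))%N.
  by rewrite -mulnA expnD leq_mul2l mulSnn_le_exp_trunc_log orbT.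
have := concentration_le_space A_meas A_zero_error n_gt0 p_gt0 conc classes_le.
rewrite divfK ?pnatr_eq0 -?lt0n // => s_le.
exact: ln_bound_of_le_log n_gt1 S_gt0 (trunc_logP (isT : (1 < 2)%N) n_gt0) s_le.
Qed.
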